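(* Let $A$ and $B$ be rings, $f: A\to B$ a ring homomorphism and $J$ a proper ideal of $B$. Then: (1) If $A\bowtie^{f}J$ is a weak Armendariz ring, then $A$ is a weak Armendariz ring. (2) If $A$ and $f(A)+J$ are weak Armendariz rings, then $A\bowtie^{f}J$ is a weak Armendariz ring.
   Context: All rings are associative with identity (not necessarily commutative), ring homomorphisms are unital, and ideals are two-sided. $\mathrm{nil}(R)$ denotes the set of nilpotent elements of a ring $R$. For a ring homomorphism $f:A\to B$ and an ideal $J$ of $B$, the amalgamation is the subring $A\bowtie^{f}J=\{(a,f(a)+j)\mid a\in A,\ j\in J\}$ of $A\times B$; $f(A)+J=\{f(a)+j: a\in A, j\in J\}$ is a subring of $B$. A ring $R$ is weak Armendariz if whenever $p(x)=\sum_{i=0}^n a_ix^i$ and $q(x)=\sum_{j=0}^m b_jx^j$ in $R[x]$ satisfy $p(x)q(x)=0$, then $a_ib_j\in\mathrm{nil}(R)$ for all $i,j$. *)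

From HB Require Import structures.
From mathcomp Require Import all_boot all_order all_algebra.
Set Implicit Arguments. Unset Strict Implicit. Unset Printing Implicit Defensive.
Import GRing.Theory.
Local Open Scope ring_scope.

Definition is_nilpotent {R : nzRingType} (x : R) : Prop := exists n : nat, x ^+ n = 0.

Definition two_sided_ideal {R : nzRingType} (J : R -> Prop) : Prop :=
  [/\ J 0,
      (forall x y, J x -> J y -> J (x + y)),
      (forall x, J x -> J (- x)),
      (forall r x, J x -> J (r * x)) &
      (forall r x, J x -> J (x * r))].

Definition proper_two_sided_ideal {R : nzRingType} (J : R -> Prop) : Prop :=
  two_sided_ideal J /\ ~ J 1.

Definition weak_armendariz (R : nzRingType) : Prop :=
  forall p q : {poly R}, p * q = 0 ->
    forall i j : nat, is_nilpotent (p`_i * q`_j).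

(* Weak Armendariz property of a subring S of R (given as a predicate):
   polynomials in S[x] are polynomials of R[x] with all coefficients in S;
   their product in S[x] is their product in R[x], and nilpotency in S is
   nilpotency in R. *)
Definition weak_armendariz_sub {R : nzRingType} (S : R -> Prop) : Prop :=
  forall p q : {poly R}, (forall i, S p`_i) -> (forall j, S q`_j) ->
    p * q = 0 -> forall i j : nat, is_nilpotent (p`_i * q`_j).

Definition amalg {A B : nzRingType} (f : {rmorphism A -> B}) (J : B -> Prop)
  : A * B -> Prop :=
  fun x => exists a j, J j /\ x = (a, f a + j).

Definition fAJ {A B : nzRingType} (f : {rmorphism A -> B}) (J : B -> Prop)
  : B -> Prop :=
  fun b => exists a j, J j /\ b = f a + j.

(** The diagonal embedding a |-> (a, f a) lands in A ⋈^f J and reflects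
    nilpotency through its first coordinate, so zero products of
    polynomials over A transfer to A ⋈^f J; this gives (1). Conversely
    A ⋈^f J sits inside A × (f(A) + J), and a product of two weak
    Armendariz subrings is weak Armendariz because an element of a product
    ring is nilpotent as soon as both coordinates are; this gives (2). *)

From HB Require Import structures.
From mathcomp Require Import all_boot all_order all_algebra.
Local Open Scope ring_scope.
Import GRing.Theory.

Lemma nilpotent_rmorph {R S : nzRingType} (g : {rmorphism R -> S}) (x : R) :
  is_nilpotent x -> is_nilpotent (g x).
Proof. by move=> [n xn0]; exists n; rewrite -rmorphXn xn0 rmorph0. Qed.

Lemma expr_pair {R S : nzRingType} (x : R * S) (k : nat) :
  x ^+ k = (x.1 ^+ k, x.2 ^+ k).
Proof.
by rewrite [LHS]surjective_pairing -(rmorphXn (@fst R S)) -(rmorphXn (@snd R S)).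
Qed.

Lemma nilpotent_pair {R S : nzRingType} (x : R * S) :
  is_nilpotent x.1 -> is_nilpotent x.2 -> is_nilpotent x.
Proof.
move=> [m xm0] [n xn0]; exists (m + n)%N.
by rewrite expr_pair [in X in (_, X)]addnC !exprD xm0 xn0 !mul0r.
Qed.

Lemma weak_armendariz_subT (R : nzRingType) :
  weak_armendariz R <-> weak_armendariz_sub (fun _ : R => True).
Proof. by split=> [wR p q _ _ | wR p q]; [exact: wR | exact: wR]. Qed.

Lemma weak_armendariz_subS {R : nzRingType} {S T : R -> Prop} :
  (forall x, S x -> T x) -> weak_armendariz_sub T -> weak_armendariz_sub S.
Proof. by move=> ST wT p q Sp Sq; apply: wT => k; apply: ST. Qed.

Lemma weak_armendariz_rmorph {R S : nzRingType} (g : {rmorphism R -> S})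
    {T : S -> Prop} :
  (forall x, T (g x)) -> (forall x, is_nilpotent (g x) -> is_nilpotent x) ->
  weak_armendariz_sub T -> weak_armendariz R.
Proof.
move=> Tg g_refl wT p q pq i j; apply: g_refl; rewrite rmorphM.
have gpq : map_poly g p * map_poly g q = 0 by rewrite -rmorphM pq rmorph0.
rewrite -!coef_map; apply: (wT _ _ _ _ gpq) => k; rewrite coef_map; apply: Tg.
Qed.

Lemma weak_armendariz_subX {R S : nzRingType} {T : R -> Prop} {U : S -> Prop} :
  weak_armendariz_sub T -> weak_armendariz_sub U ->
  weak_armendariz_sub (fun x : R * S => T x.1 /\ U x.2).
Proof.
move=> wT wU P Q TUP TUQ PQ i j.
have proj_mul0 (C : nzRingType) (g : {rmorphism R * S -> C}) :
    map_poly g P * map_poly g Q = 0.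
  by rewrite -rmorphM PQ rmorph0.
apply: nilpotent_pair => /=.
- rewrite -!(coef_map (@fst R S)).
  apply: (wT _ _ _ _ (proj_mul0 _ (@fst R S))) => k; rewrite coef_map.
    exact: (TUP k).1.
  exact: (TUQ k).1.
- rewrite -!(coef_map (@snd R S)).
  apply: (wU _ _ _ _ (proj_mul0 _ (@snd R S))) => k; rewrite coef_map.
    exact: (TUP k).2.
  exact: (TUQ k).2.
Qed.

Section Diagonal.
Context {A B : nzRingType} (f : {rmorphism A -> B}).

Definition diag_rmorph (a : A) : A * B := (a, f a).

Fact diag_rmorph_is_zmod_morphism : zmod_morphism diag_rmorph.
Proof. by move=> x y; rewrite /diag_rmorph rmorphB. Qed.

Fact diag_rmorph_is_monoid_morphism : monoid_morphism diag_rmorph.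
Proof. by split=> [|x y]; rewrite /diag_rmorph ?rmorph1 ?rmorphM. Qed.

HB.instance Definition _ := GRing.isZmodMorphism.Build A (A * B)%type
  diag_rmorph diag_rmorph_is_zmod_morphism.
HB.instance Definition _ := GRing.isMonoidMorphism.Build A (A * B)%type
  diag_rmorph diag_rmorph_is_monoid_morphism.

Lemma nilpotent_diag_rmorph (a : A) :
  is_nilpotent (diag_rmorph a) -> is_nilpotent a.
Proof. by move=> /(nilpotent_rmorph (@fst A B)). Qed.

Lemma amalg_diag_rmorph (J : B -> Prop) (a : A) :
  J 0 -> amalg f J (diag_rmorph a).
Proof. by move=> J0; exists a, 0; rewrite addr0. Qed.

Lemma amalg_snd_fAJ (J : B -> Prop) (x : A * B) :
  amalg f J x -> fAJ f J x.2.
Proof. by move=> [a [j [Jj ->]]]; exists a, j. Qed.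

End Diagonal.

Theorem theorem4p1 (A B : nzRingType) (f : {rmorphism A -> B}) (J : B -> Prop) :
  proper_two_sided_ideal J ->
  (weak_armendariz_sub (amalg f J) -> weak_armendariz A) /\
  (weak_armendariz A -> weak_armendariz_sub (fAJ f J) ->
     weak_armendariz_sub (amalg f J)).
Proof.
move=> [[J0 _ _ _ _] _]; split=> [wAJ | /weak_armendariz_subT wA wfAJ].
- apply: (weak_armendariz_rmorph (diag_rmorph f) _ _ wAJ).
    by move=> a; apply: amalg_diag_rmorph.
  exact: nilpotent_diag_rmorph.
- apply: (weak_armendariz_subS _ (weak_armendariz_subX wA wfAJ)).
  by move=> x /amalg_snd_fAJ.
Qed.
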